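(* For all positive integers $m,n$ and any $(A,\boldsymbol{\gamma})\in[0,1)^{m\times n}\times[0,1)^m$, we have $\mathcal{C}(A,\boldsymbol{\gamma})\neq\emptyset$ if and only if $(A,\boldsymbol{\gamma})\notin\mathbf{Bad}(m,n)$.
   Context: $[0,1)^{m\times n}$ is the set of real $m\times n$ matrices with entries in $[0,1)$. For $\boldsymbol{x}\in\mathbb{R}^n$, $\|\boldsymbol{x}\|=\max_i|x_i|$; for $\boldsymbol{y}\in\mathbb{R}^m$, $\langle\boldsymbol{y}\rangle=\min_{\boldsymbol{p}\in\mathbb{Z}^m}\|\boldsymbol{y}-\boldsymbol{p}\|$. ''Decreasing'' means non-increasing. $\mathcal{C}$ is the set of decreasing $\psi:\mathbb{N}\to[0,\infty)$ with $\sum_{q\ge1}q^{n-1}\psi(q)^m<\infty$. $\mathcal{C}(A,\boldsymbol{\gamma})=\{\psi\in\mathcal{C}:\langle A\boldsymbol{q}-\boldsymbol{\gamma}\rangle<\psi(\|\boldsymbol{q}\|)\text{ for infinitely many }\boldsymbol{q}\in\mathbb{Z}^n\}$. $\mathbf{Bad}(m,n)=\{(A,\boldsymbol{\gamma}):\liminf_{\boldsymbol{q}\in\mathbb{Z}^n,\|\boldsymbol{q}\|\to\infty}\|\boldsymbol{q}\|^n\langle A\boldsymbol{q}-\boldsymbol{\gamma}\rangle^m>0\}$. *)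

From HB Require Import structures.
From mathcomp Require Import all_boot all_order all_algebra.
From mathcomp Require Import all_classical all_reals all_analysis.
Set Implicit Arguments. Unset Strict Implicit. Unset Printing Implicit Defensive.
Import Order.TTheory GRing.Theory Num.Theory.
Import numFieldNormedType.Exports.
Local Open Scope classical_set_scope.
Local Open Scope ring_scope.

Definition znorm (n : nat) (q : 'cV[int]_n) : nat := \max_(i < n) `|q i ord0|%N.

Definition supnorm (R : realType) (m : nat) (y : 'cV[R]_m) : R :=
  \big[Num.max/0]_(i < m) `|y i ord0|.

(* <y> = min_{p in Z^m} ||y - p|| (the minimum exists; written as inf) *)
Definition dZ (R : realType) (m : nat) (y : 'cV[R]_m) : R :=
  inf [set supnorm (y - map_mx (fun z : int => z%:~R) p) | p in [set: 'cV[int]_m]].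

Definition affv (R : realType) (m n : nat) (A : 'M[R]_(m, n)) (g : 'cV[R]_m)
  (q : 'cV[int]_n) : 'cV[R]_m :=
  A *m map_mx (fun z : int => z%:~R) q - g.

Definition unit_mx (R : realType) (m n : nat) (A : 'M[R]_(m, n)) : Prop :=
  forall i j, 0 <= A i j /\ A i j < 1.

Definition classC (R : realType) (m n : nat) (psi : nat -> R) : Prop :=
  (forall q, 0 <= psi q) /\
  (forall i j, (i <= j)%N -> psi j <= psi i) /\
  cvgn (series (fun k : nat => (k.+1)%:R ^+ (n - 1) * psi k.+1 ^+ m)).

Definition classCA (R : realType) (m n : nat) (A : 'M[R]_(m, n)) (g : 'cV[R]_m)
  : set (nat -> R) :=
  [set psi | classC m n psi /\
     infinite_set [set q : 'cV[int]_n | dZ (affv A g q) < psi (znorm q)]].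

Definition liminf_znorm (R : realType) (n : nat) (f : 'cV[int]_n -> R) : \bar R :=
  ereal_sup [set ereal_inf [set (f q)%:E | q in [set q | (N <= znorm q)%N]]
            | N in [set: nat]].

Definition Bad (R : realType) (m n : nat) : set ('M[R]_(m, n) * 'cV[R]_m) :=
  [set Ag | (0 < liminf_znorm
       (fun q : 'cV[int]_n => ((znorm q)%:R ^+ n * dZ (affv Ag.1 Ag.2 q) ^+ m)%R))%E].
Arguments Bad {R} m n.

From HB Require Import structures.
From mathcomp Require Import all_boot all_order all_algebra.
From mathcomp Require Import all_classical all_reals all_analysis.
From mathcomp Require Import ring lra zify.
Import Order.TTheory GRing.Theory Num.Theory.
Import numFieldNormedType.Exports.
Local Open Scope classical_set_scope.
Local Open Scope ring_scope.

(* If psi is in C, the block of the series between h and 2h dominates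
   h^n psi(2h)^m, so q^n psi(q)^m -> 0 by monotonicity; infinitely many q with
   <Aq - gamma> < psi(||q||) then force the liminf defining Bad to vanish.
   Conversely, if that liminf is 0, pick q_k with strictly increasing norms t_k
   and t_k^n <Aq_k - gamma>^m < 2^-(k+1).  The values
   d_k = (2^-(k+1) / t_k^n)^(1/m) decrease and exceed <Aq_k - gamma>, and the
   step function equal to d_k on ]t_(k-1), t_k] lies in C, because its
   contribution to the series on that block is at most t_k^n d_k^m = 2^-(k+1). *)

Lemma leq_znorm {n : nat} (q : 'cV[int]_n) (i : 'I_n) : (`|q i ord0| <= znorm q)%N.
Proof. exact: (@leq_bigmax _ (fun i => `|q i ord0|%N)). Qed.

Lemma finite_znorm_lt (n B : nat) : finite_set [set q : 'cV[int]_n | (znorm q < B)%N].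
Proof.
pose shift (x : 'cV['I_B.*2.+1]_n) := map_mx (fun i : 'I_B.*2.+1 => i%:Z - B%:Z) x.
apply: (@sub_finite_set _ _ (shift @` setT)); last exact/finite_image/finite_finset.
move=> q /= qB; exists (\matrix_(i, j) inord (absz (q i j + B%:Z))) => //.
apply/matrixP => i j; rewrite !mxE; have -> : j = ord0 by apply: ord1.
have /andP[qiB Bqi] : - B%:Z < q i ord0 < B%:Z.
  by rewrite -ltr_norml -abszE ltz_nat (leq_ltn_trans (leq_znorm q i)).
have qB0 : 0 <= q i ord0 + B%:Z by lia.
rewrite inordK; first by rewrite gez0_abs ?addrK.
by rewrite -ltz_nat gez0_abs //; lia.
Qed.

Lemma infinite_znorm_unbounded (n : nat) (S : set 'cV[int]_n) :
  infinite_set S -> forall B, exists q, S q /\ (B <= znorm q)%N.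
Proof.
move=> Sinf B; apply: contrapT => noq.
apply/Sinf/(sub_finite_set _ (finite_znorm_lt n B)).
by move=> q Sq /=; rewrite ltnNge; apply/negP => Bq; apply: noq; exists q.
Qed.

Lemma dZ_ge0 {R : realType} {m : nat} (y : 'cV[R]_m) : 0 <= dZ y.
Proof.
apply: lb_le_inf; first by exists (supnorm (y - map_mx intr 0)), 0.
move=> _ [p _ <-]; apply: (big_ind (fun x => 0 <= x)) => // x1 x2 x1_ge0 _.
by rewrite le_max x1_ge0.
Qed.

Lemma liminf_znorm_gt0P (R : realType) (n : nat) (f : 'cV[int]_n -> R) :
  (0 < liminf_znorm f)%E <->
  exists2 c, 0 < c & exists N, forall q, (N <= znorm q)%N -> c <= f q.
Proof.
split.
  move=> /ereal_sup_gt[_ [N _ <-]]; set I := ereal_inf _ => I_gt0.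
  have I_le q : (N <= znorm q)%N -> (I <= (f q)%:E)%E.
    by move=> Nq; apply: ereal_inf_lbound; exists q.
  case: I I_gt0 I_le => [c | | //] c_gt0 I_le.
    by exists c => //; exists N => q /I_le.
  by exists 1 => //; exists N => q /I_le.
move=> [c c_gt0 [N Nc]]; apply: (@lt_le_trans _ _ c%:E); first by rewrite lte_fin.
apply: le_trans (ereal_sup_ubound _); last by exists N.
by apply: le_ereal_inf_tmp => _ [q Nq <-]; rewrite lee_fin; apply: Nc.
Qed.

Section ClassCDecay.
Context {R : realType} {m n : nat} {psi : nat -> R}.
Hypotheses (n_gt0 : (0 < n)%N) (psiC : classC m n psi).

Let u k := (k.+1)%:R ^+ (n - 1) * psi k.+1 ^+ m.

Lemma classC_block_le h : h%:R ^+ n * psi h.*2 ^+ m <= series u h.*2 - series u h.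
Proof.
have [psi_ge0 [psi_dec _]] := psiC.
rewrite sub_series_geq -?addnn ?leq_addr //.
apply: (@le_trans _ _ (\sum_(h <= i < h + h) h%:R ^+ (n - 1) * psi (h + h)%N ^+ m)).
  by rewrite sumr_const_nat addnK -[X in _ <= X]mulr_natl mulrA -exprS subn1 prednK.
apply: ler_sum_nat => i /andP[hi ih]; apply: ler_pM; rewrite ?exprn_ge0 ?psi_ge0 //.
  by rewrite lerXn2r ?nnegrE ?ler_nat //; lia.
by rewrite lerXn2r ?nnegrE ?psi_dec //; lia.
Qed.

Lemma classC_decay c :
  0 < c -> exists K, forall k, (K <= k)%N -> k%:R ^+ n * psi k ^+ m < c.
Proof.
move=> c_gt0; have [psi_ge0 [psi_dec /cvg_ex[l /cvgrPdist_lt u_cvg]]] := psiC.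
have e_gt0 : 0 < c / (2 * 3 ^+ n) by rewrite divr_gt0 // mulr_gt0 // exprn_gt0.
have [H _ near_l] := u_cvg _ e_gt0.
exists (H.*2 + 2)%N => k Hk; set h := k./2.
have [Hh h2k k3h] : [/\ (H <= h)%N, (h.*2 <= k)%N & (k <= 3 * h)%N].
  by move: (odd_double_half k) Hk; rewrite -/h; case: (odd k) => /= ? ?; split; lia.
have block_lt : series u h.*2 - series u h < c / 3 ^+ n.
  have H2h : (H <= h.*2)%N by lia.
  have := near_l h Hh; have := near_l _ H2h.
  rewrite /= !ltr_norml => /andP[? ?] /andP[? ?].
  have -> : c / 3 ^+ n = 2 * (c / (2 * 3 ^+ n)) by field; rewrite expf_neq0.
  lra.
apply: (@le_lt_trans _ _ (3 ^+ n * (h%:R ^+ n * psi h.*2 ^+ m))).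
  rewrite mulrA -exprMn; apply: ler_pM; rewrite ?exprn_ge0 //.
    by rewrite lerXn2r ?nnegrE // -natrM ler_nat.
  by rewrite lerXn2r ?nnegrE ?psi_dec.
rewrite mulrC -ltr_pdivlMr ?exprn_gt0 //.
exact: le_lt_trans (classC_block_le h) block_lt.
Qed.

End ClassCDecay.

Section FirstGe.
Context {t : nat -> nat}.
Hypothesis t_incr : forall k, (t k < t k.+1)%N.

Let leq_t : {mono t : i j / (i <= j)%N}.
Proof. exact/leq_mono/(homo_ltn ltn_trans). Qed.

Lemma leq_id_t k : (k <= t k)%N.
Proof. by elim: k => // k IHk; apply: leq_ltn_trans (t_incr k). Qed.

Definition first_ge j := ex_minn (ex_intro (fun i => j <= t i)%N j (leq_id_t j)).

Lemma ltn_first_ge i j : (t i < j)%N = (i < first_ge j)%N.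
Proof.
rewrite /first_ge; case: ex_minnP => k jk k_min.
apply/idP/idP => [tij | ik]; rewrite ltnNge.
  by apply: contraTN tij => ki; rewrite -leqNgt (leq_trans jk) ?leq_t.
by apply: contraTN ik => ji; rewrite -leqNgt k_min.
Qed.

Lemma leq_t_first_ge j : (j <= t (first_ge j))%N.
Proof. by rewrite leqNgt ltn_first_ge ltnn. Qed.

Lemma first_ge_t k : first_ge (t k) = k.
Proof.
apply/eqP; rewrite eqn_leq leqNgt -ltn_first_ge ltnn -leq_t.
exact: leq_t_first_ge.
Qed.

Lemma first_ge_homo : {homo first_ge : i j / (i <= j)%N}.
Proof.
move=> i j ij; rewrite leqNgt -ltn_first_ge -leqNgt.
exact: leq_trans ij (leq_t_first_ge j).
Qed.

Lemma first_geS_leq j : (0 < t 0)%N -> (first_ge j.+1 <= j)%N.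
Proof.
move=> t0_gt0; rewrite leqNgt -ltn_first_ge ltnS -ltnNge.
by elim: j => // j IHj; apply: leq_ltn_trans IHj (t_incr j).
Qed.

End FirstGe.

Lemma sumr_ltn_const (R : nmodType) (w : R) (T N : nat) :
  \sum_(k < N) (if (k < T)%N then w else 0) = w *+ minn N T.
Proof.
elim: N => [|N IHN]; first by rewrite big_ord0 min0n.
rewrite big_ord_recr /= IHN; case: (ltnP N T) => [NT | TN].
  by rewrite (minn_idPl NT) mulrS addrC.
by rewrite (minn_idPr (leqW TN)) addr0.
Qed.

Section Interpolation.
Context {R : realType} {m n : nat} {t : nat -> nat} {d : nat -> R}.
Hypotheses (n_gt0 : (0 < n)%N) (t0_gt0 : (0 < t 0)%N).
Hypothesis t_incr : forall k, (t k < t k.+1)%N.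
Hypotheses (d_ge0 : forall k, 0 <= d k) (d_noninc : nonincreasing_seq d).

Let psi j := d (first_ge t_incr j).

Lemma interpolant_series_le N :
  series (fun k => k.+1%:R ^+ (n - 1) * psi k.+1 ^+ m) N <=
  series (fun k => (t k)%:R ^+ n * d k ^+ m) N.
Proof.
rewrite !seriesEord; pose w i := (t i)%:R ^+ (n - 1) * d i ^+ m.
have w_ge0 i : 0 <= w i by rewrite mulr_ge0 ?exprn_ge0 ?d_ge0.
apply: (@le_trans _ _ (\sum_(k < N) \sum_(i < N) (if (k < t i)%N then w i else 0))).
  apply: ler_sum => k _; set i := first_ge t_incr k.+1.
  have iN : (i < N)%N by apply: leq_ltn_trans (first_geS_leq t_incr k t0_gt0) (ltn_ord k).
  rewrite (bigD1 (Ordinal iN)) //= leq_t_first_ge -[X in X <= _]addr0.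
  apply: lerD; last by apply: sumr_ge0 => j _; case: ifP.
  by rewrite /psi ler_wpM2r ?exprn_ge0 // lerXn2r ?nnegrE ?ler_nat ?leq_t_first_ge.
rewrite exchange_big /=; apply: ler_sum => i _; rewrite sumr_ltn_const.
apply: (@le_trans _ _ (w i * (t i)%:R)).
  by rewrite -[X in X <= _]mulr_natr ler_wpM2l // ler_nat geq_minr.
by rewrite /w mulrAC -exprSr subn1 prednK.
Qed.

Lemma exists_classC_interpolant :
  cvgn (series (fun k => (t k)%:R ^+ n * d k ^+ m)) ->
  exists psi : nat -> R, classC m n psi /\ forall k, psi (t k) = d k.
Proof.
move=> d_summable; exists psi; split => [|k]; last by rewrite /psi first_ge_t.
have nondecreasing_partial_sums (u : nat -> R) :
    (forall k, 0 <= u k) -> nondecreasing_seq (series u).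
  by move=> u_ge0; apply: nondecreasing_series => k _ _.
split=> [q | ]; first exact: d_ge0.
split=> [i j ij | ]; first exact/d_noninc/first_ge_homo.
apply: nondecreasing_is_cvgn.
  by apply: nondecreasing_partial_sums => k; rewrite mulr_ge0 ?exprn_ge0 ?d_ge0.
exists (limn (series (fun k => (t k)%:R ^+ n * d k ^+ m))) => _ [N _ <-].
apply: le_trans (interpolant_series_le N) (nondecreasing_cvgn_le _ d_summable N).
by apply: nondecreasing_partial_sums => k; rewrite mulr_ge0 ?exprn_ge0 ?d_ge0.
Qed.

End Interpolation.

Lemma powR_invn_expr (R : realType) (m : nat) (x : R) :
  (0 < m)%N -> 0 <= x -> (x `^ m%:R^-1) ^+ m = x.
Proof.
move=> m_gt0 x_ge0.
by rewrite -powR_mulrn ?powR_ge0 // -powRrM mulVf ?powRr1 // pnatr_eq0 -lt0n.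
Qed.

Section Approximants.
Context {R : realType} {T : Type} {m n : nat} {nm : T -> nat} {D : T -> R}.
Hypotheses (m_gt0 : (0 < m)%N) (n_gt0 : (0 < n)%N) (D_ge0 : forall x, 0 <= D x).
Hypothesis D_small : forall N e, 0 < e ->
  exists x, (N <= nm x)%N /\ (nm x)%:R ^+ n * D x ^+ m < e.

Lemma exists_sparse_approximants : exists q : nat -> T,
  [/\ (0 < nm (q 0))%N, forall k, (nm (q k) < nm (q k.+1))%N
    & forall k, (nm (q k))%:R ^+ n * D (q k) ^+ m < (2 ^+ k.+1)^-1].
Proof.
have e_gt0 k : 0 < (2 ^+ k.+1)^-1 :> R by rewrite invr_gt0 exprn_gt0.
have [f f_spec] := choice (fun Nk : nat * nat => D_small Nk.1 _ (e_gt0 Nk.2)).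
pose q := fix q k := if k is k'.+1 then f ((nm (q k')).+1, k) else f (1%N, 0%N).
exists q; split; first exact: (f_spec (1%N, 0%N)).1.
  by move=> k; exact: (f_spec ((nm (q k)).+1, k.+1)).1.
by case=> [|k]; [exact: (f_spec (1%N, 0%N)).2 | exact: (f_spec ((nm (q k)).+1, k.+1)).2].
Qed.

Lemma exists_classC_approximant :
  exists psi : nat -> R, classC m n psi /\ infinite_set [set x | D x < psi (nm x)].
Proof.
have [q [t0_gt0 t_incr q_small]] := exists_sparse_approximants.
pose t k := nm (q k); pose e k : R := (2 ^+ k.+1)^-1.
pose d k := (e k / (t k)%:R ^+ n) `^ m%:R^-1.
have t_gt0 k : (0 < t k)%N.
  by elim: k => [|k t_gt0]; [exact: t0_gt0 | exact: ltn_trans t_gt0 (t_incr k)].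
have tn_gt0 k : 0 < (t k)%:R ^+ n :> R by rewrite exprn_gt0 // ltr0n.
have d_ge0 k : 0 <= d k by apply: powR_ge0.
have d_expr k : d k ^+ m = e k / (t k)%:R ^+ n.
  by rewrite powR_invn_expr // ltW // divr_gt0 // invr_gt0 exprn_gt0.
have D_lt_d k : D (q k) < d k.
  rewrite -(ltr_pXn2r m_gt0) ?nnegrE ?D_ge0 // d_expr ltr_pdivlMr // mulrC.
  exact: q_small.
have d_noninc : nonincreasing_seq d.
  apply/nonincreasing_seqP => k; rewrite -(ler_pXn2r m_gt0) ?nnegrE // !d_expr.
  apply: ler_pM; rewrite ?invr_ge0 ?exprn_ge0 //.
    rewrite lef_pV2 ?posrE ?exprn_gt0 // [X in _ <= X]exprS.
    by rewrite ler_peMl ?exprn_ge0 // ler1n.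
  by rewrite lef_pV2 ?posrE // lerXn2r ?nnegrE // ler_nat (ltnW (t_incr k)).
have d_summable : cvgn (series (fun k => (t k)%:R ^+ n * d k ^+ m)).
  rewrite (_ : (fun k => _) = geometric 2^-1 2^-1).
    by apply: is_cvg_geometric_series; rewrite gtr0_norm ?invf_lt1 ?ltr1n.
  apply/funext => k; rewrite d_expr mulrC divfK ?gt_eqF //.
  by rewrite /e /geometric /= exprVn -invfM -exprS.
have [psi [psiC psi_t]] :=
  exists_classC_interpolant n_gt0 t0_gt0 t_incr d_ge0 d_noninc d_summable.
exists psi; split => // S_fin; apply: infinite_nat.
have t_inj : injective t by apply/incn_inj/leq_mono/(homo_ltn ltn_trans).
apply: sub_finite_set (finite_preimage (f := q) _ S_fin).
  by move=> k _ /=; rewrite -/(t k) psi_t.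
by move=> i j _ _ qij; apply: t_inj; rewrite /t qij.
Qed.

End Approximants.

Theorem corollary1p3 (R : realType) (m n : nat) (hm : (0 < m)%N) (hn : (0 < n)%N)
  (A : 'M[R]_(m, n)) (g : 'cV[R]_m) :
  unit_mx A -> (forall i, 0 <= g i ord0 /\ g i ord0 < 1) ->
  (classCA A g <> set0 <-> ~ Bad m n (A, g)).
Proof.
move=> _ _; rewrite /Bad /= liminf_znorm_gt0P; split.
  move=> /eqP/set0P[psi [psiC /infinite_znorm_unbounded psi_inf]] [c c_gt0 [N Nc]].
  have [K K_psi] := classC_decay hn psiC _ c_gt0.
  have [q [Dq_lt]] := psi_inf (maxn N K); rewrite geq_max => /andP[Nq Kq].
  suff : c <= (znorm q)%:R ^+ n * psi (znorm q) ^+ m by rewrite leNgt K_psi.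
  apply: le_trans (Nc q Nq) _; rewrite ler_wpM2l ?exprn_ge0 //.
  by rewrite lerXn2r ?nnegrE ?dZ_ge0 ?psiC.1 //; exact: ltW Dq_lt.
move=> not_bad; apply/eqP/set0P.
have D_small N e : 0 < e -> exists q,
    (N <= znorm q)%N /\ (znorm q)%:R ^+ n * dZ (affv A g q) ^+ m < e.
  move=> e_gt0; apply: contrapT => no_q; apply: not_bad; exists e => //.
  by exists N => q Nq; rewrite leNgt; apply/negP => small; apply: no_q; exists q.
have [psi psiC_inf] := exists_classC_approximant hm hn (fun q => dZ_ge0 _) D_small.
by exists psi.
Qed.
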